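(* Under the standing setup, for every $t>0$ there exists a sequence $(\pi_n)_{n\in\mathbb N}\subset P_t$ such that $\mathcal E_{\pi_n}u_0\nearrow\mathscr S(t)u_0$ as $n\to\infty$ for all $u_0\in\mathbb R^d$.
   Context: Standing setup: $d\in\mathbb N$; vectors in $\mathbb R^d$; inequalities and suprema of vectors are componentwise; reals are identified with constant vectors. A $Q$-matrix is $q\in\mathbb R^{d\times d}$ with $q_{ii}\le0$, $q_{ij}\ge0$ ($i\ne j$), $\sum_jq_{ij}=0$. Let $\mathcal P$ be a set of $Q$-matrices and $f=(f_q)_{q\in\mathcal P}\subset\mathbb R^d$ with $\sup_{q\in\mathcal P}f_q=f_{q_0}=0$ for some $q_0\in\mathcal P$, such that $\mathcal Qu:=\sup_{q\in\mathcal P}(qu+f_q)$ is finite for every $u\in\mathbb R^d$. For $q\in\mathcal P$, $t\ge0$: $S_q(t)u_0:=e^{tq}u_0+\int_0^te^{sq}f_q\,ds$. For $h\ge0$: $\mathcal E_hu_0:=\sup_{q\in\mathcal P}S_q(h)u_0$. $P$ is the set of finite subsets $\pi\subset[0,\infty)$ with $0\in\pi$; $P_t:=\{\pi\in P:\max\pi=t\}$. For $\pi=\{t_0,\dots,t_m\}$ with $0=t_0<\dots<t_m$, $m\ge1$, $\mathcal E_\pi:=\mathcal E_{t_1-t_0}\circ\cdots\circ\mathcal E_{t_m-t_{m-1}}$, and $\mathcal E_{\{0\}}:=\mathcal E_0$. The Nisio semigroup of $(\mathcal P,f)$ is $\mathscr S(t)u_0:=\sup_{\pi\in P_t}\mathcal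 E_\pi u_0$. *)

From Stdlib Require Import Reals Lra Factorial List Sorting.Sorted ClassicalEpsilon.
Open Scope R_scope.

(* Vectors in R^d: functions nat -> R, only components i < d are meaningful.
   Matrices in R^{d x d}: functions nat -> nat -> R, entries i,j < d. *)
Definition vec := nat -> R.
Definition mat := nat -> nat -> R.

Fixpoint fsum (n : nat) (g : nat -> R) : R :=
  match n with O => 0 | S m => fsum m g + g m end.

Definition mat_vec (d : nat) (A : mat) (u : vec) : vec :=
  fun i => fsum d (fun j => A i j * u j).

Definition mat_mul (d : nat) (A B : mat) : mat :=
  fun i j => fsum d (fun k => A i k * B k j).

Definition mat_id : mat := fun i j => if Nat.eqb i j then 1 else 0.

Fixpoint mat_pow (d : nat) (A : mat) (k : nat) : mat :=
  match k with O => mat_id | S m => mat_mul d (mat_pow d A m) A end.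

Definition Qmatrix (d : nat) (q : mat) : Prop :=
  (forall i, (i < d)%nat -> q i i <= 0) /\
  (forall i j, (i < d)%nat -> (j < d)%nat -> i <> j -> 0 <= q i j) /\
  (forall i, (i < d)%nat -> fsum d (fun j => q i j) = 0).

(* value of a convergent series sum_{k>=0} a k (arbitrary if divergent) *)
Definition series (a : nat -> R) : R :=
  epsilon (inhabits 0) (fun l => Un_cv (fun n => fsum (S n) a) l).

Definition mat_exp (d : nat) (t : R) (q : mat) : mat :=
  fun i j => series (fun k => t ^ k / INR (Factorial.fact k) * mat_pow d q k i j).

(* Riemann integral int_a^b g (arbitrary if not integrable) *)
Definition Rint (g : R -> R) (a b : R) : R :=
  epsilon (inhabits 0)
    (fun I => exists pr : Riemann_integrable g a b, RiemannInt pr = I).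

Definition Sq (d : nat) (q : mat) (fq : vec) (t : R) (u0 : vec) : vec :=
  fun i => mat_vec d (mat_exp d t q) u0 i
           + Rint (fun s => mat_vec d (mat_exp d s q) fq i) 0 t.

(* supremum of a set of reals (arbitrary if no least upper bound exists) *)
Definition Rsup (E : R -> Prop) : R := epsilon (inhabits 0) (fun m => is_lub E m).

Definition vsup (A : vec -> Prop) : vec :=
  fun i => Rsup (fun x => exists v, A v /\ v i = x).

Definition Eh (d : nat) (P : mat -> Prop) (f : mat -> vec) (h : R) (u0 : vec) : vec :=
  vsup (fun v => exists q, P q /\ v = Sq d q (f q) h u0).

(* A partition pi = {t_0 < ... < t_m} with t_0 = 0 is encoded as the strictly
   increasing list [t_0; ...; t_m]; pi in P_t iff max pi = t_m = t. *)
Definition in_Pt (t : R) (l : list R) : Prop :=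
  exists rest, l = 0 :: rest /\ Sorted Rlt l /\ last l 0 = t.

Fixpoint Epi_aux (d : nat) (P : mat -> Prop) (f : mat -> vec)
    (t0 : R) (rest : list R) (u : vec) : vec :=
  match rest with
  | nil => u
  | t1 :: rest' => Eh d P f (t1 - t0) (Epi_aux d P f t1 rest' u)
  end.

Definition Epi (d : nat) (P : mat -> Prop) (f : mat -> vec) (l : list R) (u : vec) : vec :=
  match l with
  | nil => u
  | t0 :: nil => Eh d P f 0 u
  | t0 :: rest => Epi_aux d P f t0 rest u
  end.

Definition Nisio (d : nat) (P : mat -> Prop) (f : mat -> vec) (t : R) (u0 : vec) : vec :=
  vsup (fun v => exists l, in_Pt t l /\ v = Epi d P f l u0).

(* Refining a partition can only increase E_pi: the semigroup property of each
   S_q gives E_(a+b) <= E_a o E_b, and E_h is monotone.  Moreover E_pi and the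
   Nisio semigroup are nonexpansive for the sup norm, since E_h commutes with
   adding constants.  Hence for each n one partition, obtained by merging finitely
   many, approximates S(t) within 1/(n+1) at all grid vectors of mesh 1/(n+1) in
   [-n, n]^d, and so within 3/(n+1) on all of [-n, n]^d.  Choosing these partitions
   successively refining gives a nondecreasing sequence converging to S(t) u0. *)

From Stdlib Require Import Reals Lra Lia List Factorial Binomial ClassicalEpsilon Sorted.
From Coquelicot Require Import Coquelicot.
Open Scope R_scope.

(** * Finite sums and matrices *)

Lemma fsum_ext n g h : (forall k, (k < n)%nat -> g k = h k) -> fsum n g = fsum n h.
Proof.
  induction n; intros H; simpl; auto.
  rewrite IHn, H by (intros; try apply H; lia). reflexivity.
Qed.

Lemma fsum_plus n g h : fsum n (fun k => g k + h k) = fsum n g + fsum n h.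
Proof. induction n; simpl; [|rewrite IHn]; ring. Qed.

Lemma fsum_mult_l n c g : fsum n (fun k => c * g k) = c * fsum n g.
Proof. induction n; simpl; [|rewrite IHn]; ring. Qed.

Lemma fsum_mult_r n c g : fsum n (fun k => g k * c) = fsum n g * c.
Proof. induction n; simpl; [|rewrite IHn]; ring. Qed.

Lemma fsum_0 n g : (forall k, (k < n)%nat -> g k = 0) -> fsum n g = 0.
Proof. induction n; intros H; simpl; auto. rewrite IHn, H by (intros; try apply H; lia). ring. Qed.

Lemma fsum_le_compat n g h : (forall k, (k < n)%nat -> g k <= h k) -> fsum n g <= fsum n h.
Proof.
  induction n; intros H; simpl; [lra|].
  apply Rplus_le_compat; [apply IHn; intros; apply H|apply H]; lia.
Qed.

Lemma fsum_nonneg n g : (forall k, (k < n)%nat -> 0 <= g k) -> 0 <= fsum n g.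
Proof.
  intros H. rewrite <- (fsum_0 n (fun _ => 0)) by auto. now apply fsum_le_compat.
Qed.

Lemma fsum_term_le n g k : (k < n)%nat -> (forall l, (l < n)%nat -> 0 <= g l) -> g k <= fsum n g.
Proof.
  induction n; intros Hk H; [lia|]. simpl.
  destruct (Nat.eq_dec k n) as [->|Hkn].
  - assert (0 <= fsum n g) by (apply fsum_nonneg; intros; apply H; lia). lra.
  - assert (g k <= fsum n g) by (apply IHn; [lia|intros; apply H; lia]).
    assert (0 <= g n) by (apply H; lia). lra.
Qed.

Lemma fsum_comm n m (g : nat -> nat -> R) :
  fsum n (fun i => fsum m (fun j => g i j)) = fsum m (fun j => fsum n (fun i => g i j)).
Proof.
  induction n; simpl.
  - symmetry; apply fsum_0; auto.
  - rewrite IHn, <- fsum_plus. reflexivity.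
Qed.

Lemma fsum_S_l n g : fsum (S n) g = g 0%nat + fsum n (fun k => g (S k)).
Proof. induction n; simpl in *; [|rewrite IHn]; ring. Qed.

Lemma fsum_sum_f_R0 n g : fsum (S n) g = sum_f_R0 g n.
Proof. induction n; simpl in *; [|rewrite <- IHn]; ring. Qed.

Lemma Rabs_fsum_le n g : Rabs (fsum n g) <= fsum n (fun k => Rabs (g k)).
Proof.
  induction n; simpl; [rewrite Rabs_R0; lra|].
  eapply Rle_trans; [apply Rabs_triang|lra].
Qed.

Lemma fsum_mat_id_l n i x : (i < n)%nat -> fsum n (fun k => mat_id i k * x k) = x i.
Proof.
  induction n; intros H; [lia|]. simpl. unfold mat_id at 2.
  destruct (Nat.eqb_spec i n) as [->|Hin].
  - rewrite fsum_0; [ring|]. intros k Hk. unfold mat_id.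
    destruct (Nat.eqb_spec n k); [lia|ring].
  - rewrite IHn by lia. ring.
Qed.

Lemma fsum_mat_id_r n j x : (j < n)%nat -> fsum n (fun k => x k * mat_id k j) = x j.
Proof.
  intros H. rewrite <- (fsum_mat_id_l n j x H). apply fsum_ext. intros k _.
  unfold mat_id. rewrite Nat.eqb_sym. ring.
Qed.

Lemma mat_mul_assoc d A B C i j :
  mat_mul d (mat_mul d A B) C i j = mat_mul d A (mat_mul d B C) i j.
Proof.
  unfold mat_mul.
  transitivity (fsum d (fun k => fsum d (fun l => A i l * B l k * C k j))).
  { apply fsum_ext; intros. rewrite <- fsum_mult_r. apply fsum_ext; intros; ring. }
  rewrite fsum_comm. apply fsum_ext; intros. rewrite <- fsum_mult_l.
  apply fsum_ext; intros; ring.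
Qed.

Lemma mat_vec_mul d A B u i :
  mat_vec d (mat_mul d A B) u i = mat_vec d A (mat_vec d B u) i.
Proof.
  unfold mat_vec, mat_mul.
  transitivity (fsum d (fun k => fsum d (fun l => A i l * B l k * u k))).
  { apply fsum_ext; intros. rewrite <- fsum_mult_r. apply fsum_ext; intros; ring. }
  rewrite fsum_comm. apply fsum_ext; intros. rewrite <- fsum_mult_l.
  apply fsum_ext; intros; ring.
Qed.

Lemma mat_pow_add d q k l i j : (i < d)%nat -> (j < d)%nat ->
  mat_mul d (mat_pow d q k) (mat_pow d q l) i j = mat_pow d q (k + l) i j.
Proof.
  revert i j. induction l; intros i j Hi Hj; simpl.
  - unfold mat_mul. rewrite fsum_mat_id_r, Nat.add_0_r; auto.
  - rewrite Nat.add_succ_r. simpl. rewrite <- mat_mul_assoc.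
    unfold mat_mul at 1 3. apply fsum_ext. intros. rewrite IHl; auto.
Qed.

Lemma mat_pow_nonneg d (M : mat) k i j :
  (forall i j, (i < d)%nat -> (j < d)%nat -> 0 <= M i j) ->
  (i < d)%nat -> (j < d)%nat -> 0 <= mat_pow d M k i j.
Proof.
  intros HM. revert i j. induction k; intros i j Hi Hj; simpl.
  - unfold mat_id; destruct (i =? j); lra.
  - apply fsum_nonneg. intros m Hm. apply Rmult_le_pos; auto.
Qed.

Lemma mat_pow_rowsum d q k i : Qmatrix d q -> (i < d)%nat ->
  fsum d (fun j => mat_pow d q k i j) = if Nat.eqb k 0 then 1 else 0.
Proof.
  intros [_ [_ Hrow]] Hi. destruct k; simpl.
  - rewrite <- (fsum_mat_id_l d i (fun _ => 1)) by auto. apply fsum_ext; intros; ring.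
  - unfold mat_mul. rewrite fsum_comm. apply fsum_0. intros m Hm.
    rewrite fsum_mult_l, Hrow by auto. ring.
Qed.

Definition mat_norm d (q : mat) := fsum d (fun m => fsum d (fun j => Rabs (q m j))).

Lemma mat_norm_nonneg d q : 0 <= mat_norm d q.
Proof. apply fsum_nonneg; intros. apply fsum_nonneg; intros. apply Rabs_pos. Qed.

Lemma Rabs_entry_le_mat_norm d q i j : (i < d)%nat -> (j < d)%nat -> Rabs (q i j) <= mat_norm d q.
Proof.
  intros Hi Hj. eapply Rle_trans.
  - apply (fsum_term_le d (fun l => Rabs (q i l)) j); auto. intros; apply Rabs_pos.
  - apply (fsum_term_le d (fun m => fsum d (fun l => Rabs (q m l))) i); auto.
    intros; apply fsum_nonneg; intros; apply Rabs_pos.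
Qed.

Lemma Rabs_mat_pow_le d q k i j : (i < d)%nat -> (j < d)%nat ->
  Rabs (mat_pow d q k i j) <= mat_norm d q ^ k.
Proof.
  revert i j; induction k; intros i j Hi Hj; simpl.
  - unfold mat_id. destruct (i =? j); rewrite ?Rabs_R1, ?Rabs_R0; lra.
  - eapply Rle_trans; [apply Rabs_fsum_le|].
    apply Rle_trans with (fsum d (fun m => mat_norm d q ^ k * Rabs (q m j))).
    + apply fsum_le_compat; intros. rewrite Rabs_mult.
      apply Rmult_le_compat_r; [apply Rabs_pos|auto].
    + rewrite fsum_mult_l, Rmult_comm. apply Rmult_le_compat_r; [apply pow_le, mat_norm_nonneg|].
      unfold mat_norm. apply fsum_le_compat. intros m Hm.
      apply (fsum_term_le d (fun l => Rabs (q m l))); auto. intros; apply Rabs_pos.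
Qed.

(** * The matrix exponential *)

Lemma series_is_series a l : is_series a l -> series a = l.
Proof.
  intros H. apply is_series_Reals in H. unfold series.
  assert (Hcv : forall l', Un_cv (fun n => fsum (S n) a) l' <-> Un_cv (sum_f_R0 a) l').
  { intros l'. split; intros Hl e He; destruct (Hl e He) as [N HN]; exists N;
      intros n Hn; [rewrite <- fsum_sum_f_R0|rewrite fsum_sum_f_R0]; auto. }
  apply (UL_sequence (sum_f_R0 a)); auto.
  apply Hcv, (epsilon_spec (inhabits 0) (fun l => Un_cv (fun n => fsum (S n) a) l)).
  exists l. now apply Hcv.
Qed.

Lemma is_series_fsum n (a : nat -> nat -> R) (l : nat -> R) :
  (forall j, (j < n)%nat -> is_series (a j) (l j)) ->
  is_series (fun k => fsum n (fun j => a j k)) (fsum n l).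
Proof.
  induction n; intros H; simpl.
  - apply is_series_Reals. intros e He. exists 0%nat. intros m _.
    unfold R_dist. rewrite sum_cte, Rmult_0_l, Rminus_0_r, Rabs_R0. exact He.
  - apply (is_series_plus (fun k => fsum n (fun j => a j k)) (a n)).
    + apply IHn; intros; apply H; lia.
    + apply H; lia.
Qed.

Lemma is_series_partial_sum_le a l n : is_series a l -> (forall k, 0 <= a k) -> sum_f_R0 a n <= l.
Proof.
  intros H Ha. apply is_series_Reals in H. apply growing_ineq; auto.
  intros m. simpl. specialize (Ha (S m)). lra.
Qed.

Lemma is_series_nonneg a l : is_series a l -> (forall k, 0 <= a k) -> 0 <= l.
Proof. intros H Ha. eapply Rle_trans; [apply (Ha 0%nat)|apply (is_series_partial_sum_le a l 0 H Ha)]. Qed.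

Lemma is_series_term_le a l n : is_series a l -> (forall k, 0 <= a k) -> a n <= l.
Proof.
  intros H Ha. eapply Rle_trans; [|apply (is_series_partial_sum_le a l n H Ha)].
  destruct n; simpl; [lra|]. pose proof (cond_pos_sum a n Ha). lra.
Qed.

Lemma is_series_eq (a : nat -> R) l1 l2 : is_series a l1 -> is_series a l2 -> l1 = l2.
Proof. intros H1 H2. rewrite <- (is_series_unique _ _ H1). now apply is_series_unique. Qed.

Lemma is_series_exp x : is_series (fun k => x ^ k / INR (fact k)) (exp x).
Proof.
  generalize (is_exp_Reals x). unfold is_pseries. apply is_series_ext.
  intros n. rewrite pow_n_pow. reflexivity.
Qed.

Lemma pow_div_fact_nonneg x k : 0 <= x -> 0 <= x ^ k / INR (fact k).
Proof. intros Hx. apply Rmult_le_pos; [now apply pow_le|apply Rlt_le, Rinv_0_lt_compat, INR_fact_lt_0]. Qed.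

Definition exp_term d q t k i j := t ^ k / INR (fact k) * mat_pow d q k i j.

Lemma Rabs_exp_term_le d q t k i j : (i < d)%nat -> (j < d)%nat ->
  Rabs (exp_term d q t k i j) <= (mat_norm d q * Rabs t) ^ k / INR (fact k).
Proof.
  intros Hi Hj. unfold exp_term, Rdiv.
  pose proof (Rabs_mat_pow_le d q k i j Hi Hj).
  assert (Hf : 0 < / INR (fact k)) by (apply Rinv_0_lt_compat, INR_fact_lt_0).
  rewrite !Rabs_mult, <- RPow_abs, (Rabs_right (/ INR (fact k))), Rpow_mult_distr by lra.
  replace (mat_norm d q ^ k * Rabs t ^ k * / INR (fact k))
    with (Rabs t ^ k * / INR (fact k) * mat_norm d q ^ k) by ring.
  apply Rmult_le_compat_l; auto. apply Rmult_le_pos; [apply pow_le, Rabs_pos|lra].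
Qed.

Lemma ex_series_Rabs_exp_term d q t i j : (i < d)%nat -> (j < d)%nat ->
  ex_series (fun k => Rabs (exp_term d q t k i j)).
Proof.
  intros Hi Hj.
  apply (@ex_series_le R_AbsRing R_CompleteNormedModule _ (fun k => (mat_norm d q * Rabs t) ^ k / INR (fact k))).
  - intros n. unfold norm; simpl. unfold abs; simpl. rewrite Rabs_Rabsolu.
    now apply Rabs_exp_term_le.
  - eexists. apply is_series_exp.
Qed.

Lemma is_series_mat_exp d q t i j : (i < d)%nat -> (j < d)%nat ->
  is_series (fun k => exp_term d q t k i j) (mat_exp d t q i j).
Proof.
  intros Hi Hj.
  assert (Hex : ex_series (fun k => exp_term d q t k i j))
    by (apply ex_series_Rabs, ex_series_Rabs_exp_term; auto).
  unfold mat_exp. rewrite (series_is_series _ (Series (fun k => exp_term d q t k i j))).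
  - now apply Series_correct.
  - apply (is_series_ext _ _ _ (fun n => eq_refl)), Series_correct, Hex.
Qed.

Definition mat_exp_coef d q i j k := mat_pow d q k i j / INR (fact k).

Lemma mat_exp_PSeries d q s i j : (i < d)%nat -> (j < d)%nat ->
  mat_exp d s q i j = PSeries (mat_exp_coef d q i j) s.
Proof.
  intros Hi Hj. symmetry. apply is_series_unique.
  apply (is_series_ext (fun k => exp_term d q s k i j)); [|now apply is_series_mat_exp].
  intros n. unfold exp_term, mat_exp_coef.
  change (s ^ n / INR (fact n) * mat_pow d q n i j = mat_pow d q n i j / INR (fact n) * s ^ n).
  unfold Rdiv. ring.
Qed.

Lemma CV_radius_mat_exp_coef d q i j x : (i < d)%nat -> (j < d)%nat ->
  Rbar_lt (Rabs x) (CV_radius (mat_exp_coef d q i j)).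
Proof.
  intros Hi Hj. destruct (CV_radius_bounded (mat_exp_coef d q i j)) as [Hub _].
  set (r := Rabs x + 1).
  apply Rbar_lt_le_trans with r; [simpl; unfold r; lra|].
  apply Hub. exists (exp (mat_norm d q * Rabs r)). intros n.
  replace (mat_exp_coef d q i j n * r ^ n) with (exp_term d q r n i j)
    by (unfold exp_term, mat_exp_coef, Rdiv; ring).
  eapply Rle_trans; [now apply Rabs_exp_term_le|].
  apply (is_series_term_le (fun k => (mat_norm d q * Rabs r) ^ k / INR (fact k))).
  - apply is_series_exp.
  - intros k. apply pow_div_fact_nonneg, Rmult_le_pos; [apply mat_norm_nonneg|apply Rabs_pos].
Qed.

Lemma continuous_mat_exp d q i j x : (i < d)%nat -> (j < d)%nat ->
  continuous (fun s => mat_exp d s q i j) x.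
Proof.
  intros Hi Hj. apply (continuous_ext (PSeries (mat_exp_coef d q i j))).
  - intros; symmetry; now apply mat_exp_PSeries.
  - apply continuity_pt_filterlim, PSeries_continuity, CV_radius_mat_exp_coef; auto.
Qed.

Lemma continuous_fsum n (h : nat -> R -> R) x :
  (forall j, (j < n)%nat -> continuous (h j) x) -> continuous (fun s => fsum n (fun j => h j s)) x.
Proof.
  induction n; intros H; simpl.
  - apply continuous_const.
  - apply (continuous_plus (fun s => fsum n (fun j => h j s)) (h n)).
    + apply IHn; intros; apply H; lia.
    + apply H; lia.
Qed.

Lemma continuous_mat_exp_vec d q (v : vec) i x : (i < d)%nat ->
  continuous (fun s => mat_vec d (mat_exp d s q) v i) x.
Proof.
  intros Hi. apply (continuous_fsum d (fun j s => mat_exp d s q i j * v j)).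
  intros j Hj. apply (continuous_mult (fun s => mat_exp d s q i j) (fun _ => v j)).
  - now apply continuous_mat_exp.
  - apply continuous_const.
Qed.

Lemma binomial_div_fact a b n :
  (a + b) ^ n / INR (fact n)
  = sum_f_R0 (fun k => a ^ k / INR (fact k) * (b ^ (n - k) / INR (fact (n - k)))) n.
Proof.
  rewrite binomial. unfold Rdiv. rewrite <- fsum_sum_f_R0, <- fsum_mult_r, <- fsum_sum_f_R0.
  apply fsum_ext. intros k Hk. unfold Binomial.C.
  pose proof (INR_fact_neq_0 n). pose proof (INR_fact_neq_0 k). pose proof (INR_fact_neq_0 (n - k)).
  field. auto.
Qed.

Lemma exp_term_cauchy d q a b n i j : (i < d)%nat -> (j < d)%nat ->
  fsum d (fun m => sum_f_R0 (fun k => exp_term d q a k i m * exp_term d q b (n - k) m j) n)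
  = exp_term d q (a + b) n i j.
Proof.
  intros Hi Hj. unfold exp_term. rewrite binomial_div_fact, <- fsum_sum_f_R0, <- fsum_mult_r.
  rewrite (fsum_ext d _ (fun m => fsum (S n) (fun k =>
      a ^ k / INR (fact k) * mat_pow d q k i m * (b ^ (n - k) / INR (fact (n - k)) * mat_pow d q (n - k) m j))))
    by (intros; symmetry; apply fsum_sum_f_R0).
  rewrite fsum_comm. apply fsum_ext. intros k Hk.
  replace (mat_pow d q n i j) with (mat_pow d q (k + (n - k)) i j) by (f_equal; lia).
  rewrite <- mat_pow_add by auto. unfold mat_mul. rewrite <- fsum_mult_l.
  apply fsum_ext. intros; ring.
Qed.

Lemma mat_exp_plus d q a b i j : (i < d)%nat -> (j < d)%nat ->
  mat_exp d (a + b) q i j = fsum d (fun m => mat_exp d a q i m * mat_exp d b q m j).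
Proof.
  intros Hi Hj. apply (is_series_eq (fun n => exp_term d q (a + b) n i j)).
  { now apply is_series_mat_exp. }
  apply (is_series_ext (fun n => fsum d (fun m =>
           sum_f_R0 (fun k => exp_term d q a k i m * exp_term d q b (n - k) m j) n))).
  { intros n. now apply exp_term_cauchy. }
  apply (is_series_fsum d (fun m n => sum_f_R0 (fun k => exp_term d q a k i m * exp_term d q b (n - k) m j) n)).
  intros m Hm. apply (is_series_mult (fun k => exp_term d q a k i m) (fun k => exp_term d q b k m j));
    try apply is_series_mat_exp; try apply ex_series_Rabs_exp_term; auto.
Qed.

Definition mat_shift (q : mat) (c : R) : mat := fun i j => q i j + c * mat_id i j.

Lemma mat_pow_shift d q c n i j : (i < d)%nat -> (j < d)%nat ->
  mat_pow d (mat_shift q c) n i j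
  = sum_f_R0 (fun k => Binomial.C n k * c ^ (n - k) * mat_pow d q k i j) n.
Proof.
  rewrite <- fsum_sum_f_R0. revert i j. induction n; intros i j Hi Hj.
  - simpl. unfold Binomial.C. simpl. field.
  - change (mat_pow d (mat_shift q c) (S n) i j)
      with (mat_mul d (mat_pow d (mat_shift q c) n) (mat_shift q c) i j).
    unfold mat_mul, mat_shift.
    transitivity (fsum d (fun m => mat_pow d (mat_shift q c) n i m * q m j)
                  + c * mat_pow d (mat_shift q c) n i j).
    { rewrite <- (fsum_mat_id_r d j (fun m => mat_pow d (mat_shift q c) n i m)) by auto.
      rewrite <- fsum_mult_l, <- fsum_plus. apply fsum_ext; intros. unfold mat_shift. ring. }
    rewrite IHn by auto.
    rewrite (fsum_ext d _ (fun m => fsum (S n) (fun k => Binomial.C n k * c ^ (n - k) * (mat_pow d q k i m * q m j))))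
      by (intros; rewrite IHn, <- fsum_mult_r by auto; apply fsum_ext; intros; ring).
    rewrite fsum_comm.
    rewrite (fsum_ext (S n) _ (fun k => Binomial.C n k * c ^ (n - k) * mat_pow d q (S k) i j))
      by (intros; apply fsum_mult_l).
    (* Pascal's rule, after splitting off the extreme terms k = 0 and k = n + 1 *)
    rewrite (fsum_S_l (S n)), (fsum_S_l n (fun k => Binomial.C n k * c ^ (n - k) * mat_pow d q k i j)).
    change (fsum (S ?m) ?g) with (fsum m g + g m).
    rewrite !C_n_0, !C_n_n, Nat.sub_diag, Nat.sub_0_r.
    rewrite (fsum_ext n (fun k => Binomial.C (S n) (S k) * c ^ (S n - S k) * mat_pow d q (S k) i j)
       (fun k => Binomial.C n k * c ^ (n - k) * mat_pow d q (S k) i j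
                 + c * (Binomial.C n (S k) * c ^ (n - S k) * mat_pow d q (S k) i j))).
    2:{ intros k Hk. rewrite <- pascal by auto. simpl (S n - S k)%nat.
        replace (n - k)%nat with (S (n - S k)) by lia. simpl. ring. }
    rewrite fsum_plus, fsum_mult_l, Nat.sub_diag. simpl. ring.
Qed.

Lemma mat_shift_nonneg d q i j : Qmatrix d q -> (i < d)%nat -> (j < d)%nat ->
  0 <= mat_shift q (mat_norm d q) i j.
Proof.
  intros [Hdiag [Hoff _]] Hi Hj. unfold mat_shift, mat_id. destruct (Nat.eqb_spec i j) as [->|Hij].
  - pose proof (Rabs_entry_le_mat_norm d q j j Hj Hj). pose proof (Rabs_maj2 (q j j)). lra.
  - specialize (Hoff i j Hi Hj Hij). lra.
Qed.

(* e^{tq} e^{ct} = e^{t(q + c I)}, and q + c I is entrywise nonnegative for c = mat_norm q. *)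
Lemma mat_exp_nonneg d q t i j : Qmatrix d q -> 0 <= t -> (i < d)%nat -> (j < d)%nat ->
  0 <= mat_exp d t q i j.
Proof.
  intros HQ Ht Hi Hj. set (c := mat_norm d q).
  assert (Hc : 0 <= c) by apply mat_norm_nonneg.
  assert (Hexp : forall k, 0 <= (c * t) ^ k / INR (fact k)) by (intros; apply pow_div_fact_nonneg; nra).
  assert (Hprod : 0 <= mat_exp d t q i j * exp (c * t)).
  { apply (is_series_nonneg (fun n => exp_term d (mat_shift q c) t n i j)).
    - apply (is_series_ext (fun n => sum_f_R0 (fun k =>
               exp_term d q t k i j * ((c * t) ^ (n - k) / INR (fact (n - k)))) n)).
      + intros n. unfold exp_term. rewrite mat_pow_shift by auto.
        rewrite <- !fsum_sum_f_R0, <- fsum_mult_l. apply fsum_ext. intros k Hk.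
        replace (t ^ n) with (t ^ k * t ^ (n - k)) by (rewrite <- pow_add; f_equal; lia).
        unfold Binomial.C, Rdiv. rewrite Rpow_mult_distr.
        pose proof (INR_fact_neq_0 n). pose proof (INR_fact_neq_0 k). pose proof (INR_fact_neq_0 (n - k)).
        field. auto.
      + apply (is_series_mult (fun k => exp_term d q t k i j) (fun k => (c * t) ^ k / INR (fact k)));
          auto using is_series_mat_exp, is_series_exp, ex_series_Rabs_exp_term.
        apply (ex_series_ext (fun k => (c * t) ^ k / INR (fact k))).
        * intros n. rewrite Rabs_right; auto. apply Rle_ge, Hexp.
        * eexists; apply is_series_exp.
    - intros n. unfold exp_term. apply Rmult_le_pos.
      + now apply pow_div_fact_nonneg.
      + apply mat_pow_nonneg; auto. intros; now apply mat_shift_nonneg. }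
  pose proof (exp_pos (c * t)). nra.
Qed.

Lemma mat_exp_rowsum d q t i : Qmatrix d q -> (i < d)%nat -> fsum d (fun j => mat_exp d t q i j) = 1.
Proof.
  intros HQ Hi. apply (is_series_eq (fun k => fsum d (fun j => exp_term d q t k i j))).
  - apply (is_series_fsum d (fun j k => exp_term d q t k i j)). intros; now apply is_series_mat_exp.
  - apply is_series_Reals. intros e He. exists 0%nat. intros n _.
    assert (Hk : forall k, fsum d (fun j => exp_term d q t k i j) = if Nat.eqb k 0 then 1 else 0).
    { intros k. unfold exp_term. rewrite fsum_mult_l.
      change (fsum d (mat_pow d q k i)) with (fsum d (fun j => mat_pow d q k i j)).
      rewrite mat_pow_rowsum by auto. destruct k; simpl; [field|ring]. }
    assert (Hsum : sum_f_R0 (fun k => fsum d (fun j => exp_term d q t k i j)) n = 1).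
    { induction n; simpl; rewrite ?IHn, Hk; simpl; ring. }
    unfold R_dist. rewrite Hsum, Rminus_diag_eq, Rabs_R0; auto.
Qed.

(** * The semiflows S_q *)

Lemma Rint_RInt g a b : ex_RInt g a b -> Rint g a b = RInt g a b.
Proof.
  intros H. unfold Rint.
  assert (Hex : exists I, exists pr : Riemann_integrable g a b, RiemannInt pr = I)
    by (exists (RiemannInt (ex_RInt_Reals_0 g a b H)); eauto).
  destruct (epsilon_spec (inhabits 0) _ Hex) as [pr <-].
  symmetry. apply RInt_Reals.
Qed.

Lemma ex_RInt_fsum n (c : nat -> R) (h : nat -> R -> R) a b :
  (forall j, (j < n)%nat -> ex_RInt (h j) a b) ->
  ex_RInt (fun s => fsum n (fun j => c j * h j s)) a b.
Proof.
  induction n; intros H; simpl.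
  - apply ex_RInt_const.
  - apply (ex_RInt_plus (fun s => fsum n (fun j => c j * h j s)) (fun s => c n * h n s)).
    + apply IHn; intros; apply H; lia.
    + apply (ex_RInt_scal (h n)). apply H; lia.
Qed.

Lemma RInt_fsum n (c : nat -> R) (h : nat -> R -> R) a b :
  (forall j, (j < n)%nat -> ex_RInt (h j) a b) ->
  RInt (fun s => fsum n (fun j => c j * h j s)) a b = fsum n (fun j => c j * RInt (h j) a b).
Proof.
  induction n; intros H; simpl.
  - rewrite RInt_const. apply Rmult_0_r.
  - rewrite (RInt_plus (fun s => fsum n (fun j => c j * h j s)) (fun s => c n * h n s)).
    + rewrite IHn, (RInt_scal (h n)) by (intros; apply H; lia). reflexivity.
    + apply ex_RInt_fsum; intros; apply H; lia.
    + apply (ex_RInt_scal (h n)). apply H; lia.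
Qed.

Section Semiflow.

Variables (d : nat) (q : mat) (fq : vec).
Hypothesis HQ : Qmatrix d q.

Let forcing i s := mat_vec d (mat_exp d s q) fq i.

Lemma ex_RInt_forcing i a b : (i < d)%nat -> ex_RInt (forcing i) a b.
Proof.
  intros Hi. apply (@ex_RInt_continuous R_CompleteNormedModule). intros.
  now apply continuous_mat_exp_vec.
Qed.

Lemma Sq_RInt h u i : (i < d)%nat -> Sq d q fq h u i = mat_vec d (mat_exp d h q) u i + RInt (forcing i) 0 h.
Proof. intros Hi. unfold Sq. rewrite Rint_RInt by now apply ex_RInt_forcing. reflexivity. Qed.

Lemma mat_exp_vec_plus a b v i : (i < d)%nat ->
  mat_vec d (mat_exp d (a + b) q) v i = mat_vec d (mat_exp d a q) (mat_vec d (mat_exp d b q) v) i.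
Proof.
  intros Hi. rewrite <- mat_vec_mul. apply fsum_ext. intros k Hk.
  now rewrite mat_exp_plus.
Qed.

(* Duhamel's formula: e^{aq} int_0^b e^{sq} f ds = int_a^(a+b) e^{sq} f ds. *)
Lemma Sq_plus a b u i : (i < d)%nat -> Sq d q fq (a + b) u i = Sq d q fq a (Sq d q fq b u) i.
Proof.
  intros Hi. rewrite !Sq_RInt by auto. unfold mat_vec at 2.
  rewrite (fsum_ext d _ (fun j => mat_exp d a q i j * mat_vec d (mat_exp d b q) u j
                                  + mat_exp d a q i j * RInt (forcing j) 0 b))
    by (intros; rewrite Sq_RInt by auto; ring).
  rewrite fsum_plus, <- RInt_fsum by (intros; now apply ex_RInt_forcing).
  change (fsum d (fun j => mat_exp d a q i j * mat_vec d (mat_exp d b q) u j))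
    with (mat_vec d (mat_exp d a q) (mat_vec d (mat_exp d b q) u) i).
  rewrite <- mat_exp_vec_plus by auto.
  assert (Hshift : RInt (fun s => fsum d (fun j => mat_exp d a q i j * forcing j s)) 0 b
                   = RInt (forcing i) a (a + b)).
  { rewrite (RInt_ext _ (fun s => scal 1 (forcing i (1 * s + a)))).
    - rewrite (@RInt_comp_lin R_CompleteNormedModule) by now apply ex_RInt_forcing. f_equal; ring.
    - intros s _. unfold forcing.
      transitivity (mat_vec d (mat_exp d a q) (mat_vec d (mat_exp d s q) fq) i); [reflexivity|].
      rewrite <- mat_exp_vec_plus by auto. unfold scal; simpl; unfold mult; simpl.
      rewrite !Rmult_1_l, (Rplus_comm s a). reflexivity. }
  rewrite Hshift, <- (RInt_Chasles (forcing i) 0 a (a + b)) by now apply ex_RInt_forcing.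
  unfold plus; simpl. ring.
Qed.

Lemma Sq_monotone h u v i : 0 <= h -> (i < d)%nat ->
  (forall j, (j < d)%nat -> u j <= v j) -> Sq d q fq h u i <= Sq d q fq h v i.
Proof.
  intros Hh Hi H. apply Rplus_le_compat_r, fsum_le_compat. intros j Hj.
  apply Rmult_le_compat_l; auto. now apply mat_exp_nonneg.
Qed.

Lemma Sq_add_const h u c i : (i < d)%nat ->
  Sq d q fq h (fun j => u j + c) i = Sq d q fq h u i + c.
Proof.
  intros Hi. unfold Sq, mat_vec.
  rewrite (fsum_ext d _ (fun j => mat_exp d h q i j * u j + c * mat_exp d h q i j)) by (intros; ring).
  rewrite fsum_plus, fsum_mult_l, mat_exp_rowsum by auto. ring.
Qed.

Lemma Sq_le_const h u B i : 0 <= h -> (i < d)%nat ->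
  (forall j, (j < d)%nat -> fq j <= 0) -> (forall j, (j < d)%nat -> u j <= B) ->
  Sq d q fq h u i <= B.
Proof.
  intros Hh Hi Hf Hu.
  assert (Hfree : Sq d q fq h (fun _ => 0) i <= 0).
  { rewrite Sq_RInt by auto. unfold mat_vec at 1. rewrite fsum_0 by (intros; ring).
    rewrite Rplus_0_l. apply Rle_trans with (RInt (fun _ => 0) 0 h).
    2:{ rewrite RInt_const. apply Req_le, Rmult_0_r. }
    apply RInt_le; auto using ex_RInt_forcing, ex_RInt_const.
    intros x Hx. rewrite <- (fsum_0 d (fun _ => 0)) by auto.
    apply fsum_le_compat. intros j Hj.
    assert (0 <= mat_exp d x q i j) by (apply mat_exp_nonneg; auto; lra).
    specialize (Hf j Hj). nra. }
  apply Rle_trans with (Sq d q fq h (fun j => 0 + B) i).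
  - apply Sq_monotone; auto. intros j Hj. specialize (Hu j Hj). lra.
  - rewrite Sq_add_const by auto. lra.
Qed.

End Semiflow.

(** * Partitions *)

Lemma StronglySorted_head_lt a l x : StronglySorted Rlt (a :: l) -> In x l -> a < x.
Proof. intros H Hx. apply StronglySorted_inv in H. rewrite Forall_forall in H. now apply H. Qed.

Lemma StronglySorted_tail a l : StronglySorted Rlt (a :: l) -> StronglySorted Rlt l.
Proof. intros H. now apply StronglySorted_inv in H. Qed.

Lemma In_last l : l <> nil -> In (last l 0) l.
Proof.
  induction l as [|a [|b l] IH]; intros Hl; [congruence|now left|].
  right. apply IH. discriminate.
Qed.

Lemma le_last l x : StronglySorted Rlt l -> In x l -> x <= last l 0.
Proof.
  induction l as [|a [|b l] IH]; intros H Hx; [destruct Hx| |].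
  - destruct Hx as [<-|[]]. apply Rle_refl.
  - change (last (a :: b :: l) 0) with (last (b :: l) 0).
    destruct Hx as [<-|Hx].
    + apply Rlt_le, (StronglySorted_head_lt a (b :: l)); auto. apply In_last. discriminate.
    + apply IH; auto. now apply StronglySorted_tail in H.
Qed.

Lemma last_eq_max l y : StronglySorted Rlt l -> In y l -> (forall z, In z l -> z <= y) -> last l 0 = y.
Proof.
  intros H Hy Hmax. apply Rle_antisym.
  - apply Hmax, In_last. now intros ->.
  - now apply le_last.
Qed.

Lemma in_Pt_0_t t : 0 < t -> in_Pt t (0 :: t :: nil).
Proof. intros Ht. exists (t :: nil). repeat constructor. exact Ht. Qed.

Lemma in_Pt_inv t l : in_Pt t l -> 0 < t ->
  exists rest, l = 0 :: rest /\ rest <> nil /\ StronglySorted Rlt (0 :: rest) /\ last (0 :: rest) 0 = t.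
Proof.
  intros [rest [-> [HS HL]]] Ht. exists rest. repeat split; auto.
  - intros ->. simpl in HL. lra.
  - apply Sorted_StronglySorted; auto. intros x y z; apply Rlt_trans.
Qed.

Lemma in_Pt_range t l x : 0 < t -> in_Pt t l -> In x l -> 0 <= x <= t.
Proof.
  intros Ht Hl Hx. destruct (in_Pt_inv t l Hl Ht) as [rest [-> [_ [HS HL]]]]. split.
  - destruct Hx as [<-|Hx]; [lra|]. apply Rlt_le, (StronglySorted_head_lt 0 rest); auto.
  - rewrite <- HL. now apply le_last.
Qed.

Lemma in_Pt_intro t rest : StronglySorted Rlt (0 :: rest) -> In t (0 :: rest) ->
  (forall x, In x (0 :: rest) -> x <= t) -> in_Pt t (0 :: rest).
Proof.
  intros HS Ht Hmax. exists rest. split; auto. split.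
  - now apply StronglySorted_Sorted.
  - now apply last_eq_max.
Qed.

Fixpoint insert (x : R) (l : list R) : list R :=
  match l with
  | nil => x :: nil
  | y :: l' => if Rlt_dec x y then x :: l else if Rlt_dec y x then y :: insert x l' else l
  end.

Lemma In_insert x l z : In z (insert x l) <-> x = z \/ In z l.
Proof.
  induction l as [|y l IH]; simpl; [tauto|].
  destruct (Rlt_dec x y); simpl; [tauto|]. destruct (Rlt_dec y x); simpl.
  - rewrite IH. tauto.
  - assert (x = y) by lra. subst. tauto.
Qed.

Lemma insert_StronglySorted x l : StronglySorted Rlt l -> StronglySorted Rlt (insert x l).
Proof.
  induction l as [|y l IH]; intros H; simpl; [repeat constructor|].
  destruct (Rlt_dec x y).
  - constructor; auto. apply Forall_forall. intros z [<-|Hz]; auto.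
    pose proof (StronglySorted_head_lt y l z H Hz). lra.
  - destruct (Rlt_dec y x); auto. constructor.
    + apply IH. now apply StronglySorted_tail in H.
    + apply Forall_forall. intros z Hz. apply In_insert in Hz.
      destruct Hz as [<-|Hz]; auto. now apply (StronglySorted_head_lt y l).
Qed.

Lemma in_Pt_insert t x l : 0 < t -> 0 <= x <= t -> in_Pt t l -> in_Pt t (insert x l).
Proof.
  intros Ht Hx Hl. pose proof (in_Pt_range t l) as Hrange.
  destruct (in_Pt_inv t l Hl Ht) as [rest [-> [_ [HS HL]]]].
  assert (HtIn : In t (0 :: rest)) by (rewrite <- HL; apply In_last; discriminate).
  simpl. destruct (Rlt_dec x 0); [lra|]. destruct (Rlt_dec 0 x); [|exact Hl].
  apply in_Pt_intro.
  - constructor.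
    + apply insert_StronglySorted. now apply StronglySorted_tail in HS.
    + apply Forall_forall. intros z Hz. apply In_insert in Hz.
      destruct Hz as [<-|Hz]; auto. now apply (StronglySorted_head_lt 0 rest).
  - destruct HtIn as [<-|HtIn]; [now left|]. right. apply In_insert. auto.
  - intros z [<-|Hz]; [lra|]. apply In_insert in Hz.
    destruct Hz as [<-|Hz]; [lra|]. apply (Hrange z); auto. now right.
Qed.

Lemma in_Pt_common_refinement t l1 l2 : 0 < t -> in_Pt t l1 -> in_Pt t l2 ->
  exists l, in_Pt t l /\ incl l1 l /\ incl l2 l.
Proof.
  intros Ht H1 H2. pose proof (fun x => in_Pt_range t l2 x Ht H2) as Hrange. clear H2.
  induction l2 as [|a l2 IH].
  - exists l1. split; auto. split; [apply incl_refl|intros x []].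
  - destruct IH as [l [Hl [Hl1 Hl2]]]. { intros; apply Hrange; now right. }
    exists (insert a l). split; [apply in_Pt_insert; auto; apply Hrange; now left|].
    split; intros x Hx; apply In_insert; auto.
    destruct Hx as [<-|Hx]; auto.
Qed.

Lemma in_Pt_refinement_for_all {A : Type} t (Q : A -> list R -> Prop) (L : list A) l0 : 0 < t ->
  (forall a l l', In a L -> in_Pt t l -> in_Pt t l' -> incl l l' -> Q a l -> Q a l') ->
  (forall a, In a L -> exists l, in_Pt t l /\ Q a l) ->
  in_Pt t l0 -> exists l, in_Pt t l /\ incl l0 l /\ forall a, In a L -> Q a l.
Proof.
  intros Ht Hmono. induction L as [|a L IH]; intros Hex Hl0.
  - exists l0. split; auto. split; [apply incl_refl|intros a []].
  - destruct IH as [l1 [H1 [Hincl1 HQ1]]]; auto.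
    { intros b l l' Hb. apply Hmono. now right. }
    { intros b Hb. apply Hex. now right. }
    destruct (Hex a (or_introl eq_refl)) as [la [Hla HQa]].
    destruct (in_Pt_common_refinement t l1 la Ht H1 Hla) as [l [Hl [Hl1 Hla']]].
    exists l. split; auto. split; [eapply incl_tran; eauto|].
    intros b [->|Hb].
    + apply (Hmono b la); auto. now left.
    + apply (Hmono b l1); auto. now right.
Qed.

(** * Grids and sequences *)

Lemma nat_floor y : 0 <= y -> exists k : nat, INR k <= y < INR k + 1.
Proof.
  intros Hy. destruct (INR_archimed 1 y) as [N HN]; [lra|]. rewrite Rmult_1_r in HN.
  induction N as [|N IH]; [simpl in HN; lra|].
  destruct (Rlt_or_le y (INR N)) as [H|H]; [now apply IH|].
  exists N. rewrite S_INR in HN. lra.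
Qed.

Definition grid (n : nat) : list R :=
  map (fun k => INR k / (INR n + 1) - INR n) (seq 0 (S (2 * n * S n))).

Lemma grid_approx n x : Rabs x <= INR n -> exists g, In g (grid n) /\ Rabs (g - x) <= / (INR n + 1).
Proof.
  intros Hx. assert (Hn : 0 < INR n + 1) by (pose proof (pos_INR n); lra).
  pose proof (Rle_abs x). pose proof (Rle_abs (- x)). rewrite Rabs_Ropp in *.
  set (y := (x + INR n) * (INR n + 1)).
  assert (Hy : 0 <= y) by (apply Rmult_le_pos; lra).
  destruct (nat_floor y Hy) as [k Hk].
  exists (INR k / (INR n + 1) - INR n). split.
  - apply (in_map (fun k => INR k / (INR n + 1) - INR n)), in_seq. split; [lia|].
    enough (INR k <= INR (2 * n * S n)) by (apply INR_le in H1; lia).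
    rewrite !mult_INR. replace (INR 2) with 2 by (simpl; ring). rewrite S_INR.
    assert (y <= 2 * INR n * (INR n + 1)) by (unfold y; apply Rmult_le_compat_r; lra). lra.
  - replace (INR k / (INR n + 1) - INR n - x) with ((INR k - y) * / (INR n + 1)) by (unfold y; field; lra).
    rewrite Rabs_mult, (Rabs_right (/ (INR n + 1))) by (apply Rle_ge, Rlt_le, Rinv_0_lt_compat; auto).
    assert (Rabs (INR k - y) <= 1) by (apply Rabs_le; lra).
    assert (0 < / (INR n + 1)) by (apply Rinv_0_lt_compat; auto). nra.
Qed.

Fixpoint grid_vectors (d : nat) (g : list R) : list vec :=
  match d with
  | O => (fun _ => 0) :: nil
  | S m => flat_map (fun v => map (fun x => fun j => if Nat.eqb j m then x else v j) g) (grid_vectors m g)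
  end.

Lemma grid_vectors_approx d g (u : vec) e :
  (forall j, (j < d)%nat -> exists x, In x g /\ Rabs (x - u j) <= e) ->
  exists v, In v (grid_vectors d g) /\ forall j, (j < d)%nat -> Rabs (v j - u j) <= e.
Proof.
  induction d as [|m IH]; intros H.
  - exists (fun _ => 0). split; [now left|intros; lia].
  - destruct IH as [v [Hv Hvu]]; [intros; apply H; lia|].
    destruct (H m (Nat.lt_succ_diag_r m)) as [x [Hx Hxu]].
    exists (fun j => if Nat.eqb j m then x else v j). split.
    + apply in_flat_map. exists v. split; auto.
      apply (in_map (fun x => fun j => if Nat.eqb j m then x else v j)); auto.
    + intros j Hj. destruct (Nat.eqb_spec j m) as [->|]; auto. apply Hvu. lia.
Qed.

Lemma iterated_choice {A : Type} (Q : A -> Prop) (Rn : nat -> A -> A -> Prop) (a0 : A) :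
  Q a0 -> (forall n a, Q a -> exists b, Q b /\ Rn n a b) ->
  exists s : nat -> A, forall n, Q (s n) /\ Rn n (s n) (s (S n)).
Proof.
  intros H0 Hstep.
  destruct (choice (fun (na : nat * A) b => Q (snd na) -> Q b /\ Rn (fst na) (snd na) b)) as [g Hg].
  { intros [n a]. destruct (classic (Q a)) as [Ha|Ha].
    - destruct (Hstep n a Ha) as [b Hb]. exists b. auto.
    - exists a. simpl. tauto. }
  set (s := nat_rect (fun _ => A) a0 (fun m x => g (m, x))).
  assert (Hs : forall n, Q (s n)).
  { induction n as [|n IH]; [exact H0|exact (proj1 (Hg (n, s n) IH))]. }
  exists s. intros n. split; [apply Hs|exact (proj2 (Hg (n, s n) (Hs n)))].
Qed.

Lemma Un_cv_from_below (a : nat -> R) L c N : (forall n, a n <= L) ->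
  (forall n, (N <= n)%nat -> L - c / (INR n + 1) <= a n) -> Un_cv a L.
Proof.
  intros Hup Hlow e He.
  destruct (INR_archimed e (Rabs c)) as [M HM]; auto.
  exists (Nat.max N M). intros n Hn.
  assert (HnM : INR M <= INR n) by (apply le_INR; lia).
  specialize (Hlow n ltac:(lia)). specialize (Hup n).
  assert (Hpos : 0 < INR n + 1) by (pose proof (pos_INR n); lra).
  assert (c / (INR n + 1) < e).
  { apply Rmult_lt_reg_r with (INR n + 1); auto. unfold Rdiv.
    rewrite Rmult_assoc, Rinv_l by lra. pose proof (Rle_abs c). nra. }
  unfold R_dist. rewrite Rabs_left1; lra.
Qed.

(** * The operators E_h, E_pi and the Nisio semigroup *)

Lemma Rsup_is_lub E : bound E -> (exists x, E x) -> is_lub E (Rsup E).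
Proof.
  intros Hb Hne. unfold Rsup. apply epsilon_spec.
  destruct (completeness E Hb Hne) as [m Hm]. eauto.
Qed.

Definition vec_norm1 d (u : vec) := fsum d (fun j => Rabs (u j)).

Lemma le_vec_norm1 d u j : (j < d)%nat -> Rabs (u j) <= vec_norm1 d u.
Proof. intros Hj. apply (fsum_term_le d (fun j => Rabs (u j))); auto. intros; apply Rabs_pos. Qed.

Section Operators.

Variables (d : nat) (P : mat -> Prop) (f : mat -> vec) (q0 : mat).
Hypothesis HQ : forall q, P q -> Qmatrix d q.
Hypothesis Hq0 : P q0.
Hypothesis Hf : forall q j, P q -> (j < d)%nat -> f q j <= 0.

Lemma Eh_is_lub h u i : 0 <= h -> (i < d)%nat ->
  is_lub (fun x => exists v, (exists q, P q /\ v = Sq d q (f q) h u) /\ v i = x) (Eh d P f h u i).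
Proof.
  intros Hh Hi. apply Rsup_is_lub.
  - exists (vec_norm1 d u). intros x [v [[q [Hq ->]] <-]]. apply Sq_le_const; auto.
    intros j Hj. eapply Rle_trans; [apply Rle_abs|now apply le_vec_norm1].
  - exists (Sq d q0 (f q0) h u i), (Sq d q0 (f q0) h u). eauto.
Qed.

Lemma Sq_le_Eh h u i q : 0 <= h -> (i < d)%nat -> P q -> Sq d q (f q) h u i <= Eh d P f h u i.
Proof. intros Hh Hi Hq. apply (Eh_is_lub h u i Hh Hi). exists (Sq d q (f q) h u). eauto. Qed.

Lemma Eh_le h u i B : 0 <= h -> (i < d)%nat ->
  (forall q, P q -> Sq d q (f q) h u i <= B) -> Eh d P f h u i <= B.
Proof. intros Hh Hi H. apply (Eh_is_lub h u i Hh Hi). intros x [v [[q [Hq ->]] <-]]. auto. Qed.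

Lemma Eh_le_const h u B i : 0 <= h -> (i < d)%nat ->
  (forall j, (j < d)%nat -> u j <= B) -> Eh d P f h u i <= B.
Proof. intros Hh Hi Hu. apply Eh_le; auto. intros q Hq. apply Sq_le_const; auto. Qed.

Lemma Eh_shift_le h u v c i : 0 <= h -> (i < d)%nat ->
  (forall j, (j < d)%nat -> u j <= v j + c) -> Eh d P f h u i <= Eh d P f h v i + c.
Proof.
  intros Hh Hi H. apply Eh_le; auto. intros q Hq.
  apply Rle_trans with (Sq d q (f q) h (fun j => v j + c) i).
  - apply Sq_monotone; auto.
  - rewrite Sq_add_const by auto. apply Rplus_le_compat_r, Sq_le_Eh; auto.
Qed.

Lemma Eh_monotone h u v i : 0 <= h -> (i < d)%nat ->
  (forall j, (j < d)%nat -> u j <= v j) -> Eh d P f h u i <= Eh d P f h v i.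
Proof.
  intros Hh Hi H. rewrite <- (Rplus_0_r (Eh d P f h v i)).
  apply Eh_shift_le; auto. intros j Hj. rewrite Rplus_0_r. auto.
Qed.

(* S_q(a + b) = S_q(a) S_q(b), and keeping the control q on both steps is
   admissible for E_a o E_b. *)
Lemma Eh_plus_le a b u i : 0 <= a -> 0 <= b -> (i < d)%nat ->
  Eh d P f (a + b) u i <= Eh d P f a (Eh d P f b u) i.
Proof.
  intros Ha Hb Hi. apply Eh_le; [lra|auto|]. intros q Hq.
  rewrite Sq_plus by auto.
  apply Rle_trans with (Sq d q (f q) a (Eh d P f b u) i).
  - apply Sq_monotone; auto. intros j Hj. now apply Sq_le_Eh.
  - now apply Sq_le_Eh.
Qed.

Lemma Epi_aux_shift_le rest t0 u v c i : StronglySorted Rlt (t0 :: rest) ->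
  (forall j, (j < d)%nat -> u j <= v j + c) -> (i < d)%nat ->
  Epi_aux d P f t0 rest u i <= Epi_aux d P f t0 rest v i + c.
Proof.
  revert t0 i. induction rest as [|t1 rest IH]; intros t0 i HS H Hi; simpl; auto.
  pose proof (StronglySorted_head_lt t0 (t1 :: rest) t1 HS (or_introl eq_refl)).
  apply Eh_shift_le; [lra|auto|]. intros j Hj.
  apply IH; auto. now apply StronglySorted_tail in HS.
Qed.

Lemma Epi_aux_le_const rest t0 u B i : StronglySorted Rlt (t0 :: rest) ->
  (forall j, (j < d)%nat -> u j <= B) -> (i < d)%nat -> Epi_aux d P f t0 rest u i <= B.
Proof.
  revert t0 i. induction rest as [|t1 rest IH]; intros t0 i HS H Hi; simpl; auto.
  pose proof (StronglySorted_head_lt t0 (t1 :: rest) t1 HS (or_introl eq_refl)).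
  apply Eh_le_const; [lra|auto|]. intros j Hj.
  apply IH; auto. now apply StronglySorted_tail in HS.
Qed.

Lemma Epi_aux_refine r' t0 r u i :
  StronglySorted Rlt (t0 :: r) -> StronglySorted Rlt (t0 :: r') ->
  last (t0 :: r) 0 = last (t0 :: r') 0 -> incl r r' -> (i < d)%nat ->
  Epi_aux d P f t0 r u i <= Epi_aux d P f t0 r' u i.
Proof.
  revert t0 r i. induction r' as [|t1 r2 IH]; intros t0 r i S1 S2 HL Hincl Hi.
  - destruct r as [|s r1]; [apply Rle_refl|]. destruct (Hincl s (or_introl eq_refl)).
  - assert (Ht01 : t0 < t1) by (apply (StronglySorted_head_lt t0 (t1 :: r2)); auto; now left).
    assert (S2' : StronglySorted Rlt (t1 :: r2)) by now apply StronglySorted_tail in S2.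
    destruct r as [|s r1].
    { exfalso. assert (t1 <= last (t1 :: r2) 0) by (apply le_last; auto; now left).
      simpl in HL. change (t0 = last (t1 :: r2) 0) in HL. lra. }
    assert (Hr1 : forall x, In x r1 -> s < x).
    { intros x Hx. apply (StronglySorted_head_lt s r1); auto. now apply StronglySorted_tail in S1. }
    assert (Hst : t1 <= s).
    { destruct (Hincl s (or_introl eq_refl)) as [->|Hs]; [lra|].
      apply Rlt_le, (StronglySorted_head_lt t1 r2); auto. }
    simpl Epi_aux. destruct (Rle_lt_or_eq_dec _ _ Hst) as [Hlt|<-].
    + (* the node t1 is missing from r: split the first step of r at t1 *)
      replace (s - t0) with ((t1 - t0) + (s - t1)) by ring.
      eapply Rle_trans; [apply Eh_plus_le; auto; lra|].
      apply Eh_monotone; [lra|auto|]. intros j Hj.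
      change (Eh d P f (s - t1) (Epi_aux d P f s r1 u) j) with (Epi_aux d P f t1 (s :: r1) u j).
      apply IH; auto.
      * constructor; [now apply StronglySorted_tail in S1|].
        apply Forall_forall. intros x [<-|Hx]; auto. specialize (Hr1 x Hx). lra.
      * intros x Hx. assert (t1 < x) by (destruct Hx as [<-|Hx]; auto; specialize (Hr1 x Hx); lra).
        destruct (Hincl x Hx) as [<-|]; auto; lra.
    + apply Eh_monotone; [lra|auto|]. intros j Hj. apply IH; auto.
      * now apply StronglySorted_tail in S1.
      * intros x Hx. specialize (Hr1 x Hx).
        destruct (Hincl x (or_intror Hx)) as [<-|]; auto; lra.
Qed.

Lemma Epi_cons_0 rest u : rest <> nil -> Epi d P f (0 :: rest) u = Epi_aux d P f 0 rest u.
Proof. destruct rest; [congruence|reflexivity]. Qed.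

Section Horizon.

Variable t : R.
Hypothesis Ht : 0 < t.

Lemma Epi_shift_le l u v c i : in_Pt t l ->
  (forall j, (j < d)%nat -> u j <= v j + c) -> (i < d)%nat ->
  Epi d P f l u i <= Epi d P f l v i + c.
Proof.
  intros Hl H Hi. destruct (in_Pt_inv t l Hl Ht) as [rest [-> [Hn [HS _]]]].
  rewrite !Epi_cons_0 by auto. now apply Epi_aux_shift_le.
Qed.

Lemma Epi_le_const l u B i : in_Pt t l ->
  (forall j, (j < d)%nat -> u j <= B) -> (i < d)%nat -> Epi d P f l u i <= B.
Proof.
  intros Hl H Hi. destruct (in_Pt_inv t l Hl Ht) as [rest [-> [Hn [HS _]]]].
  rewrite Epi_cons_0 by auto. now apply Epi_aux_le_const.
Qed.

Lemma Epi_refine l l' u i : in_Pt t l -> in_Pt t l' -> incl l l' -> (i < d)%nat ->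
  Epi d P f l u i <= Epi d P f l' u i.
Proof.
  intros Hl Hl' Hincl Hi.
  destruct (in_Pt_inv t l Hl Ht) as [rest [-> [Hn [HS HL]]]].
  destruct (in_Pt_inv t l' Hl' Ht) as [rest' [-> [Hn' [HS' HL']]]].
  rewrite !Epi_cons_0 by auto. apply Epi_aux_refine; auto; [congruence|].
  intros x Hx. pose proof (StronglySorted_head_lt 0 rest x HS Hx).
  destruct (Hincl x (or_intror Hx)) as [<-|]; auto. lra.
Qed.

Lemma Nisio_is_lub u i : (i < d)%nat ->
  is_lub (fun x => exists v, (exists l, in_Pt t l /\ v = Epi d P f l u) /\ v i = x) (Nisio d P f t u i).
Proof.
  intros Hi. apply Rsup_is_lub.
  - exists (vec_norm1 d u). intros x [v [[l [Hl ->]] <-]]. apply Epi_le_const; auto.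
    intros j Hj. eapply Rle_trans; [apply Rle_abs|now apply le_vec_norm1].
  - exists (Epi d P f (0 :: t :: nil) u i), (Epi d P f (0 :: t :: nil) u).
    split; auto. exists (0 :: t :: nil). split; auto. now apply in_Pt_0_t.
Qed.

Lemma Epi_le_Nisio l u i : in_Pt t l -> (i < d)%nat -> Epi d P f l u i <= Nisio d P f t u i.
Proof. intros Hl Hi. apply (Nisio_is_lub u i Hi). eauto. Qed.

Lemma Nisio_approx u i e : (i < d)%nat -> 0 < e ->
  exists l, in_Pt t l /\ Nisio d P f t u i - e < Epi d P f l u i.
Proof.
  intros Hi He. apply NNPP. intros Hno.
  assert (Nisio d P f t u i <= Nisio d P f t u i - e); [|lra].
  apply (Nisio_is_lub u i Hi). intros x [v [[l [Hl ->]] <-]].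
  apply Rnot_lt_le. intros Hlt. apply Hno. eauto.
Qed.

Lemma Nisio_shift_le u v c i : (forall j, (j < d)%nat -> u j <= v j + c) -> (i < d)%nat ->
  Nisio d P f t u i <= Nisio d P f t v i + c.
Proof.
  intros H Hi. apply (Nisio_is_lub u i Hi). intros x [w [[l [Hl ->]] <-]].
  eapply Rle_trans; [now apply (Epi_shift_le l u v c i)|].
  apply Rplus_le_compat_r. now apply Epi_le_Nisio.
Qed.

Definition approximates_on_grid (n : nat) (l : list R) := forall v i,
  In v (grid_vectors d (grid n)) -> (i < d)%nat ->
  Nisio d P f t v i - / (INR n + 1) < Epi d P f l v i.

Lemma approximating_refinement n l0 : in_Pt t l0 ->
  exists l, in_Pt t l /\ incl l0 l /\ approximates_on_grid n l.
Proof.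
  intros Hl0.
  assert (Hn : 0 < / (INR n + 1)) by (apply Rinv_0_lt_compat; pose proof (pos_INR n); lra).
  destruct (in_Pt_refinement_for_all t
    (fun (vi : vec * nat) l => Nisio d P f t (fst vi) (snd vi) - / (INR n + 1) < Epi d P f l (fst vi) (snd vi))
    (list_prod (grid_vectors d (grid n)) (seq 0 d)) l0 Ht) as [l [Hl [Hincl Happrox]]]; auto.
  - intros [v i] l l' Hvi Hl' Hl'' Hll' H. apply in_prod_iff, proj2, in_seq in Hvi.
    eapply Rlt_le_trans; [exact H|]. apply Epi_refine; auto; simpl; lia.
  - intros [v i] Hvi. apply in_prod_iff, proj2, in_seq in Hvi. apply Nisio_approx; auto. simpl; lia.
  - exists l. split; auto. split; auto. intros v i Hv Hi.
    apply (Happrox (v, i)), in_prod; auto. apply in_seq. lia.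
Qed.

(* 3/(n+1): the grid approximation itself, plus replacing u by a nearby grid
   vector on each side. *)
Lemma approximates_on_grid_le n l u i : in_Pt t l -> approximates_on_grid n l ->
  vec_norm1 d u <= INR n -> (i < d)%nat ->
  Nisio d P f t u i - 3 / (INR n + 1) <= Epi d P f l u i.
Proof.
  intros Hl Happrox Hu Hi.
  destruct (grid_vectors_approx d (grid n) u (/ (INR n + 1))) as [v [Hv Hvu]].
  { intros j Hj. apply grid_approx. eapply Rle_trans; [now apply (le_vec_norm1 d)|exact Hu]. }
  assert (Hclose : forall j, (j < d)%nat -> v j <= u j + / (INR n + 1) /\ u j <= v j + / (INR n + 1)).
  { intros j Hj. specialize (Hvu j Hj). pose proof (Rle_abs (v j - u j)). pose proof (Rabs_maj2 (v j - u j)). lra. }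
  assert (Hv_u : Epi d P f l v i <= Epi d P f l u i + / (INR n + 1))
    by (apply Epi_shift_le; auto; intros j Hj; now apply Hclose).
  assert (Hu_v : Nisio d P f t u i <= Nisio d P f t v i + / (INR n + 1))
    by (apply Nisio_shift_le; auto; intros j Hj; now apply Hclose).
  specialize (Happrox v i Hv Hi). unfold Rdiv. lra.
Qed.

Lemma Nisio_approximating_sequence : exists pis : nat -> list R,
  (forall n, in_Pt t (pis n)) /\
  forall (u0 : vec) i, (i < d)%nat ->
    (forall n, Epi d P f (pis n) u0 i <= Epi d P f (pis (S n)) u0 i) /\
    Un_cv (fun n => Epi d P f (pis n) u0 i) (Nisio d P f t u0 i).
Proof.
  destruct (iterated_choice (in_Pt t) (fun n l l' => incl l l' /\ approximates_on_grid n l')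
              (0 :: t :: nil)) as [s Hs].
  { now apply in_Pt_0_t. }
  { intros n l Hl. destruct (approximating_refinement n l Hl) as [l' [? [? ?]]]. eauto. }
  exists (fun n => s (S n)). split; [intros n; apply Hs|]. intros u0 i Hi. split.
  - intros n. apply Epi_refine; auto; apply Hs.
  - destruct (INR_archimed 1 (vec_norm1 d u0)) as [N HN]; [lra|].
    apply (Un_cv_from_below _ _ 3 N).
    + intros n. apply Epi_le_Nisio; auto. apply Hs.
    + intros n Hn. apply approximates_on_grid_le; try apply Hs; auto.
      apply le_INR in Hn. lra.
Qed.

End Horizon.

End Operators.

Theorem mainTheorem6
  (d : nat) (P : mat -> Prop) (f : mat -> vec) (q0 : mat)
  (HQ : forall q, P q -> Qmatrix d q)
  (Hq0 : P q0)
  (Hf0 : forall i, (i < d)%nat -> f q0 i = 0)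
  (Hsupf : forall i, (i < d)%nat -> is_lub (fun x => exists q, P q /\ x = f q i) 0)
  (Hfin : forall (u : vec) i, (i < d)%nat ->
     bound (fun x => exists q, P q /\ x = mat_vec d q u i + f q i))
  (t : R) (Ht : 0 < t) :
  exists pis : nat -> list R,
    (forall n, in_Pt t (pis n)) /\
    forall (u0 : vec) i, (i < d)%nat ->
      (forall n, Epi d P f (pis n) u0 i <= Epi d P f (pis (S n)) u0 i) /\
      Un_cv (fun n => Epi d P f (pis n) u0 i) (Nisio d P f t u0 i).
Proof.
  apply (Nisio_approximating_sequence d P f q0 HQ Hq0); auto.
  intros q j Hq Hj. apply (Hsupf j Hj). eauto.
Qed.
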